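(* For every temporal graph with static graph $G=(V,E)$, lifetime $T_{\max}$ and every $\delta\in\mathbb N^+$, the Follow algorithm (described in the context) terminates after at most $6|E| + \lceil T_{\max}/\delta\rceil$ rounds.
   Context: A temporal graph $\mathcal G=(V,E,\lambda)$ with lifetime $T_{\max}$ consists of a finite undirected static graph $(V,E)$ and a labeling $\lambda:E\to\{1,\dots,T_{\max}\}$; edge $e$ is present only at time $\lambda(e)$. Infection model with parameter $\delta\in\mathbb N^+$: a seed $(u,t)$ makes $u$ infected at time $t$; otherwise a susceptible node $u$ becomes infected at time $t$ iff some neighbour $v$ infectious at time $t$ has $\lambda(uv)=t$ (exactly one infector recorded if several exist). A node infected at time $t$ is infectious at times $t+1,\dots,t+\delta$ and resistant afterwards. Each round, the Discoverer submits seed infections and observes an infection log (triples $(u,v,t)$: $u$ infected $v$ at time $t$). Subroutine Explore$(u,t)$: for each $t'\in\{t-\delta-1,t-1,t\}$, if no round with seed $(u,t')$ was performed, perform a round with the single seed $(u,t')$ and record it; then for each newly observed successful infection along an edge $uv$ at time $t''$, call Explore$(v,t'')$. Algorithm Follow: pick any node $v_0$; for each $i\in[0,\lceil T_{\max}/\delta\rceil]$ perform a round with single seed $(v_0,i\delta)$; for each edge $e=v_0u$ along which an infection succeeds, call Explore$(u,\lambda(e))$. *)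

From HB Require Import structures.
From mathcomp Require Import all_boot all_order all_algebra.
Set Implicit Arguments. Unset Strict Implicit. Unset Printing Implicit Defensive.
Import Order.TTheory GRing.Theory Num.Theory.

(* A temporal graph: vertex set V (a finType), edge set E (a set of 2-element
   subsets of V), labeling lam : E -> {1..Tmax} (given on all subsets,
   constrained only on E).  Times are integers (seed times may be <= 0). *)

Section Model.
Variable V : finType.
Variables (E : {set {set V}}) (lam : {set V} -> nat) (delta : nat).

Definition infectious_at (inf : V -> option int) (v : V) (t : int) : Prop :=
  exists s, inf v = Some s /\ (s < t)%R /\ (t <= s + (Posz delta))%R.

Definition can_infect (inf : V -> option int) (v u : V) (t : int) : Prop :=
  [set v; u] \in E /\ Posz (lam [set v; u]) = t /\ infectious_at inf v t.

(* inf u = Some t : u gets infected at time t; None : never infected. *)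
Definition infection_run (a : V) (t0 : int) (inf : V -> option int) : Prop :=
  inf a = Some t0 /\
  forall u, u != a -> forall t : int,
    inf u = Some t <->
    ((exists v, can_infect inf v u t) /\
     forall t' : int, (t' < t)%R -> ~ exists v, can_infect inf v u t').

(* infection triple ((v, u), t): v infected u at time t *)
Definition valid_log (a : V) (t0 : int) (L : seq (V * V * int)) : Prop :=
  exists inf, infection_run a t0 inf /\
    (forall x, x \in L ->
       x.1.2 != a /\ inf x.1.2 = Some x.2 /\ can_infect inf x.1.1 x.1.2 x.2) /\
    (forall u t, u != a -> inf u = Some t ->
       count (fun x : V * V * int => x.1.2 == u) L = 1).
End Model.

Definition ceil_div (T d : nat) : nat := (T + d - 1) %/ d.

Section Algorithm.
Variable V : finType.
Variables (lam : {set V} -> nat) (delta : nat).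
(* obs a t = the infection log returned for a round with single seed (a, t).
   Each seed is used in at most one round, so a function suffices; the
   infector choice among several possible ones is arbitrary (obs is
   universally quantified in the theorem). *)
Variable obs : V -> int -> seq (V * V * int).

(* state = list of seeds of the rounds performed so far (in order) *)
Definition observed (s : seq (V * int)) : seq (V * V * int) :=
  flatten [seq obs p.1 p.2 | p <- s].

Fixpoint run_calls (f : seq (V * int) -> V -> int -> option (seq (V * int)))
    (s : seq (V * int)) (calls : seq (V * int)) : option (seq (V * int)) :=
  match calls with
  | [::] => Some s
  | c :: cs => match f s c.1 c.2 with
               | None => None
               | Some s' => run_calls f s' cs
               end
  end.

(* Explore(u,t) with fuel (None = fuel exhausted) *)
Fixpoint explore (fuel : nat) (s : seq (V * int)) (u : V) (t : int)
    : option (seq (V * int)) :=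
  match fuel with
  | 0 => None
  | fuel'.+1 =>
    let cand := [:: (u, (t - (Posz delta) - 1)%R); (u, (t - 1)%R); (u, t)] in
    let newr := [seq p <- cand | p \notin s] in
    let s1 := s ++ newr in
    let newtr := undup [seq x <- observed newr |
                         (x.1.1 == u) && (x \notin observed s)] in
    run_calls (explore fuel') s1 [seq (x.1.2, x.2) | x <- newtr]
  end.

Definition follow (Tmax : nat) (v0 : V) (fuel : nat) : option (seq (V * int)) :=
  let init := [seq (v0, Posz (i * delta)) | i <- iota 0 (ceil_div Tmax delta)] in
  let calls := undup [seq (x.1.2, Posz (lam [set v0; x.1.2])) |
                       x <- observed init & x.1.1 == v0] in
  run_calls (explore fuel) init calls.
End Algorithm.

From mathcomp Require Import all_boot all_order all_algebra.
From mathcomp Require Import zify.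
Set Implicit Arguments. Unset Strict Implicit. Unset Printing Implicit Defensive.

(* Explore is only ever called on (u, t) where u was infected along an edge e
   at time t = lam e, so every round it performs has one of the seeds
   (u, lam e - delta - 1), (u, lam e - 1), (u, lam e) with u an endpoint of e:
   at most 6 |E| seeds.  Since no seed is used twice, Explore performs at most
   6 |E| rounds besides the ceil (Tmax / delta) initial ones.  Termination
   follows from the same count: every call of Explore that performs a round
   uses up one of these finitely many seeds. *)

Lemma size_flatten_map_le (A : eqType) (B : Type) (f : A -> seq B) (l : seq A)
    (k : nat) :
  (forall x, x \in l -> size (f x) <= k) ->
  size (flatten (map f l)) <= k * size l.
Proof.
elim: l => [|x l IHl] //= le_fk.
rewrite size_cat mulnS leq_add ?le_fk ?mem_head // IHl // => y l_y.
by rewrite le_fk // inE l_y orbT.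
Qed.

Lemma count_notin_subset (T : eqType) (s s' l : seq T) :
  {subset s <= s'} ->
  count (fun p => p \notin s') l <= count (fun p => p \notin s) l.
Proof. by move=> sub_ss'; apply: sub_count => p /=; apply: contra; apply: sub_ss'. Qed.

Lemma count_notin_subset_lt (T : eqType) (s s' l : seq T) (p : T) :
  {subset s <= s'} -> p \in l -> p \notin s -> p \in s' ->
  count (fun p => p \notin s') l < count (fun p => p \notin s) l.
Proof.
move=> sub_ss'; elim: l => [|x l IHl] //=; rewrite inE => /orP[/eqP <-|l_p] s'p sp.
  by rewrite s'p sp add0n add1n ltnS count_notin_subset.
have := IHl l_p s'p sp; have := sub_ss' x.
by case: (x \in s'); case: (x \in s) => //=; lia.
Qed.

Section Follow.
Variables (V : finType) (E : {set {set V}}) (lam : {set V} -> nat) (delta : nat).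
Variable obs : V -> int -> seq (V * V * int).
Hypothesis valid_obs : forall a t, valid_log E lam delta a t (obs a t).
Hypothesis delta_gt0 : 0 < delta.

Definition explore_seeds (u : V) (t : int) : seq (V * int) :=
  [:: (u, (t - Posz delta - 1)%R); (u, (t - 1)%R); (u, t)].

Definition incident_seed (c : V * int) : Prop :=
  exists2 e, e \in E & c.1 \in e /\ c.2 = Posz (lam e).

Definition edge_seeds : seq (V * int) :=
  flatten [seq flatten [seq explore_seeds w (Posz (lam e)) | w <- enum e]
          | e <- enum E].

Definition unused_edge_seeds (s : seq (V * int)) : nat :=
  count (fun p => p \notin s) edge_seeds.

Lemma size_edge_seeds :
  (forall e, e \in E -> #|e| = 2) -> size edge_seeds <= 6 * #|E|.
Proof.
move=> card_edge; rewrite /edge_seeds cardE.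
apply: size_flatten_map_le => e Ee.
have size_e : size (enum e) = 2 by rewrite -cardE card_edge // -mem_enum.
by rewrite -[6]/(3 * 2) -{2}size_e; apply: size_flatten_map_le.
Qed.

Lemma explore_seeds_uniq u t : uniq (explore_seeds u t).
Proof.
rewrite /= !inE !negb_or !xpair_eqE !eqxx /= andbT.
by rewrite -!andbA; apply/and3P; split; apply/eqP; lia.
Qed.

Lemma explore_seeds_sub u t :
  incident_seed (u, t) -> {subset explore_seeds u t <= edge_seeds}.
Proof.
case=> e Ee [/= e_u ->] p p_seed.
apply/flatten_mapP; exists e; first by rewrite mem_enum.
by apply/flatten_mapP; exists u; rewrite ?mem_enum.
Qed.

Lemma observed_edge s x :
  x \in observed obs s ->
  [set x.1.1; x.1.2] \in E /\ Posz (lam [set x.1.1; x.1.2]) = x.2.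
Proof.
case/flatten_mapP => p _ obs_x.
have [inf [_ [log_ok _]]] := valid_obs p.1 p.2.
by have [_ [_ [? [? _]]]] := log_ok x obs_x.
Qed.

Lemma incident_observed s x :
  x \in observed obs s -> incident_seed (x.1.2, x.2).
Proof.
by case/observed_edge => Ex lam_x; exists [set x.1.1; x.1.2]; rewrite ?set22.
Qed.

Definition grows_into (s s' : seq (V * int)) : Prop :=
  [/\ uniq s', {subset s <= s'} & {subset s' <= s ++ edge_seeds}].

Lemma grows_into_refl s : uniq s -> grows_into s s.
Proof. by split=> // p sp; rewrite mem_cat sp. Qed.

Lemma grows_into_trans s1 s2 s3 :
  grows_into s1 s2 -> grows_into s2 s3 -> grows_into s1 s3.
Proof.
case=> _ sub12 sub12' [uniq3 sub23 sub23']; split=> // p.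
  by move/sub12/sub23.
move/sub23'; rewrite mem_cat => /orP[/sub12' //|seed_p].
by rewrite mem_cat seed_p orbT.
Qed.

Definition terminates_within (fuel : nat)
    (F : seq (V * int) -> V -> int -> option (seq (V * int))) : Prop :=
  forall s u t, incident_seed (u, t) -> uniq s -> unused_edge_seeds s < fuel ->
    exists2 s', F s u t = Some s' & grows_into s s'.

Lemma run_calls_grows fuel F calls s :
  terminates_within fuel F -> (forall c, c \in calls -> incident_seed c) ->
  uniq s -> unused_edge_seeds s < fuel ->
  exists2 s', run_calls F s calls = Some s' & grows_into s s'.
Proof.
move=> F_ok; elim: calls s => [|c cs IHcs] s inc_calls uniq_s unused_lt /=.
  by exists s; last exact: grows_into_refl.
have inc_c : incident_seed (c.1, c.2) by case: c inc_calls => ? ? /(_ _ (mem_head _ _)).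
have [s1 -> grow1] := F_ok s c.1 c.2 inc_c uniq_s unused_lt.
have [uniq1 sub1 _] := grow1.
have unused1 := leq_ltn_trans (count_notin_subset _ sub1) unused_lt.
have [|s2 -> grow2] := IHcs s1 _ uniq1 unused1.
  by move=> c' cs_c'; apply: inc_calls; rewrite inE cs_c' orbT.
by exists s2; first by []; apply: grows_into_trans grow2.
Qed.

Lemma explore_terminates fuel : terminates_within fuel (explore delta obs fuel).
Proof.
elim: fuel => [|fuel IHfuel] s u t inc_ut uniq_s unused_lt //.
pose newr := [seq p <- explore_seeds u t | p \notin s].
have -> : explore delta obs fuel.+1 s u t = run_calls (explore delta obs fuel)
   (s ++ newr) [seq (x.1.2, x.2) | x <- undup [seq x <- observed obs newr |
                  (x.1.1 == u) && (x \notin observed obs s)]] by [].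
have newr_seeds : {subset newr <= edge_seeds}.
  by move=> p; rewrite mem_filter => /andP[_ /(explore_seeds_sub inc_ut)].
have uniq_newr : uniq (s ++ newr).
  rewrite cat_uniq uniq_s filter_uniq ?explore_seeds_uniq // andbT.
  by apply/hasPn => p; rewrite mem_filter => /andP[].
have grow_newr : grows_into s (s ++ newr).
  split=> // p; first by rewrite mem_cat => ->.
  by rewrite !mem_cat => /orP[-> // | /newr_seeds ->]; rewrite orbT.
case newr_eq: newr => [|p r].
  by rewrite /= cats0; exists s; last exact: grows_into_refl.
rewrite -newr_eq.
have newr_p : p \in newr by rewrite newr_eq mem_head.
have unused_newr : unused_edge_seeds (s ++ newr) < fuel.
  have [_ sub_s _] := grow_newr.
  move: (newr_p); rewrite mem_filter => /andP[sp seed_p].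
  have := count_notin_subset_lt sub_s (explore_seeds_sub inc_ut seed_p) sp.
  by rewrite mem_cat newr_p orbT => /(_ isT) lt; apply: leq_trans lt _.
set calls := map _ _.
have inc_calls c : c \in calls -> incident_seed c.
  move=> /mapP[x]; rewrite mem_undup mem_filter => /andP[_ obs_x] ->.
  exact: incident_observed obs_x.
have [s' -> grow'] := run_calls_grows IHfuel inc_calls uniq_newr unused_newr.
by exists s'; last exact: grows_into_trans grow'.
Qed.

End Follow.

Theorem mainTheorem7 (V : finType) (E : {set {set V}}) (lam : {set V} -> nat)
    (Tmax delta : nat)
    (HE : forall e, e \in E -> #|e| = 2)
    (Hlam : forall e, e \in E -> 0 < lam e <= Tmax)
    (Hdelta : 0 < delta)
    (obs : V -> int -> seq (V * V * int))
    (Hobs : forall a t, valid_log E lam delta a t (obs a t))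
    (v0 : V) :
  exists fuel rounds,
    follow lam delta obs Tmax v0 fuel = Some rounds /\
    size rounds <= 6 * #|E| + ceil_div Tmax delta.
Proof.
pose init := [seq (v0, Posz (i * delta)) | i <- iota 0 (ceil_div Tmax delta)].
pose fuel := (size (edge_seeds E lam delta)).+1.
have uniq_init : uniq init.
  by rewrite map_inj_uniq ?iota_uniq // => i j [] /eqP; rewrite eqn_pmul2r // => /eqP.
have inc_calls c : c \in undup [seq (x.1.2, Posz (lam [set v0; x.1.2])) |
                                 x <- observed obs init & x.1.1 == v0] ->
                   incident_seed E lam c.
  rewrite mem_undup => /mapP[x]; rewrite mem_filter => /andP[/eqP x_v0 obs_x] ->.
  by rewrite -x_v0; have [_ ->] := observed_edge Hobs obs_x; apply: incident_observed obs_x.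
have unused_init : unused_edge_seeds E lam delta init < fuel by rewrite ltnS count_size.
have [rounds run_eq [uniq_rounds _ sub_rounds]] :=
  run_calls_grows (explore_terminates Hobs Hdelta (fuel := fuel)) inc_calls uniq_init unused_init.
exists fuel, rounds; split; first exact: run_eq.
apply: leq_trans (uniq_leq_size uniq_rounds sub_rounds) _.
by rewrite size_cat size_map size_iota addnC leq_add2r size_edge_seeds.
Qed.
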